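(* Let $p$ be a prime, let $G$ be a finite group of $p$-power order, let $\varphi\colon A\to B$ be an isomorphism between subgroups $A,B$ of $G$, and let $G^*=\langle G,t\mid t^{-1}at=\varphi(a),\ a\in A\rangle$. If $G^*$ is residually $p$, then there exists a central filtration $(G_i)$ of $G$, compatible with $(G,\varphi)$, such that for all $i<j$, all $a\in A\cap G_i$ and all $b\in B\cap G_i$, the order of the automorphism of $H(G_i/G_j,\ c_b\circ\varphi_{ij}\circ c_a)$ induced by $c_b\circ\varphi_{ij}\circ c_a$ is a power of $p$.
   Context: A group is residually $p$ if for every non-trivial element there is a homomorphism to a finite $p$-group not killing it. A filtration of $G$ is a sequence $(G_1,\dots,G_n)$ of normal subgroups with $G=G_1\supsetneq\cdots\supsetneq G_n=\{1\}$, with $G_i=\{1\}$ for $i>n$; it is central if $G_i/G_{i+1}$ is central in $G/G_{i+1}$ for each $i$; it is compatible with $(G,\varphi)$ if $\varphi$ restricts to an isomorphism $A\cap G_i\to B\cap G_i$ for each $i$. For $i<j$, $\varphi_{ij}\colon (A\cap G_i)G_j/G_j\to (B\cap G_i)G_j/G_j$ is the isomorphism induced by $\varphi$. For $g\in G$, $c_g(x)=g^{-1}xg$; for $a\in A\cap G_i$ (resp. $b\in B\cap G_i$), $c_a$ (resp. $c_b$) denotes the induced automorphism of $(A\cap G_i)G_j/G_j$ (resp. $(B\cap G_i)G_j/G_j$), so $c_b\circ\varphi_{ij}\circ c_a$ is an isomorphism between subgroups of $G_i/G_j$. For a group $Q$ and an isomorphism $\psi\colon A'\to B'$ between subgroups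 of $Q$, the core $H(Q,\psi)$ is $\bigcap_k H_k$ where $H_0=A'\cap B'$ and $H_{k+1}=\psi^{-1}(H_k)\cap H_k\cap\psi(H_k)$ (with $\psi^{-1}(H_k)=\{a\in A':\psi(a)\in H_k\}$); $\psi$ restricts to an automorphism of $H(Q,\psi)$. *)

From mathcomp Require Import all_boot all_fingroup all_solvable.
Set Implicit Arguments. Unset Strict Implicit. Unset Printing Implicit Defensive.
Import GroupScope.
Local Open Scope group_scope.

(* The HNN extension G* = < G, t | t^-1 a t = phi a, a in A >, presented as  *)
(* words over the letters g (g in G), t and t^-1, modulo the congruence       *)
(* generated by the multiplication table of G, t t^-1 = 1 = t^-1 t and the    *)
(* HNN relations.                                                             *)

Inductive hnn_letter (gT : Type) := HG of gT | HT of bool.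
(* HT true = t, HT false = t^-1 *)

Section HNN.
Variables (gT : finGroupType) (G A : {set gT}) (phi : gT -> gT).

Definition hnn_word_in (w : seq (hnn_letter gT)) : bool :=
  all (fun l => if l is HG g then g \in G else true) w.

Inductive hnn_step : seq (hnn_letter gT) -> seq (hnn_letter gT) -> Prop :=
| hnn_mul g h : g \in G -> h \in G -> hnn_step [:: HG g; HG h] [:: HG (g * h)]
| hnn_one : hnn_step [:: HG 1] [::]
| hnn_tti : hnn_step [:: HT _ true; HT _ false] [::]
| hnn_tit : hnn_step [:: HT _ false; HT _ true] [::]
| hnn_rel a : a \in A -> hnn_step [:: HT _ false; HG a; HT _ true] [:: HG (phi a)].

Inductive hnn_eq : seq (hnn_letter gT) -> seq (hnn_letter gT) -> Prop :=
| hnn_eq_step u v l r : hnn_step l r -> hnn_eq (u ++ l ++ v) (u ++ r ++ v)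
| hnn_eq_refl w : hnn_eq w w
| hnn_eq_sym w1 w2 : hnn_eq w1 w2 -> hnn_eq w2 w1
| hnn_eq_trans w1 w2 w3 : hnn_eq w1 w2 -> hnn_eq w2 w3 -> hnn_eq w1 w3.

End HNN.

Definition hnn_eval (gT rT : finGroupType) (f : gT -> rT) (x : rT)
    (w : seq (hnn_letter gT)) : rT :=
  foldr (fun l acc => (match l with
                       | HG g => f g
                       | HT true => x
                       | HT false => x^-1
                       end) * acc) 1 w.

(* G* is residually p: every non-trivial element of G* survives under some   *)
(* homomorphism to a finite p-group P. Homomorphisms G* -> P are exactly the   *)
(* pairs (f, x), f : G -> P a homomorphism, x in P, with x^-1 f(a) x = f(phi a). *)
Definition hnn_residually_p (p : nat) (gT : finGroupType) (G A : {group gT})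
    (phi : {morphism A >-> gT}) : Prop :=
  forall w : seq (hnn_letter gT), hnn_word_in G w ->
    ~ hnn_eq G A phi w [::] ->
    exists (rT : finGroupType) (P : {group rT}) (f : {morphism G >-> rT}) (x : rT),
      [/\ p.-group P, f @* G \subset P, x \in P,
          {in A, forall a, f a ^ x = f (phi a)} & hnn_eval f x w != 1].

(* Filtrations (indexed 1..n; Gs i = 1 for i > n)                           *)

Definition filtration (gT : finGroupType) (G : {group gT}) (n : nat)
    (Gs : nat -> {group gT}) : Prop :=
  [/\ (1 <= n)%N /\ Gs 1%N = G, Gs n = 1%G,
      (forall i, (1 <= i)%N -> Gs i <| G),
      (forall i, (1 <= i < n)%N -> Gs i.+1 \proper Gs i) &
      (forall i, (n < i)%N -> Gs i = 1%G)].

Definition central_filtration (gT : finGroupType) (G : {group gT}) (n : nat)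
    (Gs : nat -> {group gT}) : Prop :=
  forall i, (1 <= i)%N -> Gs i / Gs i.+1 \subset 'Z(G / Gs i.+1).

Definition compatible_filtration (gT : finGroupType) (A B : {group gT})
    (phi : {morphism A >-> gT}) (Gs : nat -> {group gT}) : Prop :=
  forall i, (1 <= i)%N -> phi @* (A :&: Gs i) = B :&: Gs i.

(* phi_ij : (A cap G_i)G_j/G_j -> (B cap G_i)G_j/G_j, induced by phi *)
Definition phi_ij (gT : finGroupType) (A : {group gT}) (phi : {morphism A >-> gT})
    (Gi Gj : {group gT}) (X : coset_of Gj) : coset_of Gj :=
  if [pick y in A :&: Gi | coset Gj y == X] is Some y then coset Gj (phi y) else 1.

(* c_b o phi_ij o c_a, with c_g(x) = g^-1 x g = x ^ g *)
Definition psi_ij (gT : finGroupType) (A : {group gT}) (phi : {morphism A >-> gT})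
    (Gi Gj : {group gT}) (a b : gT) (X : coset_of Gj) : coset_of Gj :=
  (@phi_ij _ _ phi Gi Gj (X ^ coset Gj a)) ^ coset Gj b.

Section Core.
Variables (T : finType) (A' B' : {set T}) (psi : T -> T).

Fixpoint core_seq (k : nat) : {set T} :=
  match k with
  | 0 => A' :&: B'
  | k.+1 => let H := core_seq k in
            [set x in A' | psi x \in H] :&: H :&: (psi @: (H :&: A'))
  end.

Definition in_core (x : T) : Prop := forall k, x \in core_seq k.

Definition core_aut_order (m : nat) : Prop :=
  [/\ (0 < m)%N, (forall x, in_core x -> iter m psi x = x) &
      (forall m', (0 < m' < m)%N -> exists x, in_core x /\ iter m' psi x != x)].
End Core.

(* For each homomorphism (f, t) of G* to a finite p-group P, pull the lower
   central series of P back to G, and intersect over a family of such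
   homomorphisms separating the points of G (G embeds in G*, which is residually
   p).  This gives a central series of G ending in 1; it is compatible with phi
   because f (phi a) = f a ^ t and t normalises each term.  Removing repeated
   terms yields the filtration.  Modulo the l-th term, c_b o phi_ij o c_a lifts
   on each P to conjugation by f a * t * f b, an element of a p-group, so some
   power p ^ e of it fixes the core pointwise and the order of the induced
   automorphism divides p ^ e. *)

From mathcomp Require Import all_boot all_fingroup all_solvable.
From Stdlib Require Import Classical ClassicalEpsilon.
Set Implicit Arguments. Unset Strict Implicit. Unset Printing Implicit Defensive.
Import GroupScope.
Local Open Scope group_scope.

Lemma hnn_eval_cat (gT rT : finGroupType) (f : gT -> rT) (x : rT) w1 w2 :
  hnn_eval f x (w1 ++ w2) = hnn_eval f x w1 * hnn_eval f x w2.
Proof. by elim: w1 => [|l w IH] /=; rewrite ?mul1g // IH mulgA. Qed.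

Lemma hnn_eval_eq (gT rT : finGroupType) (G A : {set gT}) (phi : gT -> gT)
    (f : gT -> rT) (x : rT) :
  {in G &, {morph f : u v / u * v}} -> f 1 = 1 ->
  {in A, forall a, f a ^ x = f (phi a)} ->
  forall w1 w2, hnn_eq G A phi w1 w2 -> hnn_eval f x w1 = hnn_eval f x w2.
Proof.
move=> fM f1 fJ w1 w2; elim=> // [u v l r step|]; last by move=> *; congruence.
rewrite !hnn_eval_cat; congr (_ * (_ * _)).
case: step => /= [g h Gg Gh||||a Aa]; rewrite ?mulg1 ?f1 ?mulgV ?mulVg ?fM //.
by rewrite -fJ // mulgA.
Qed.

Lemma inj_on_of_eq_card (T : finType) (X Y : {set T}) : #|X| = #|Y| ->
  exists h : T -> T, {in X &, injective h} /\ {in X, forall x, h x \in Y}.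
Proof.
move=> cardXY; exists (fun t => nth t (enum Y) (index t (enum X))).
have ltXY x : x \in X -> index x (enum X) < size (enum Y).
  by move=> Xx; rewrite -cardE -cardXY cardE index_mem mem_enum.
split=> [x y Xx Xy /= | x Xx /=]; last by rewrite -mem_enum mem_nth ?ltXY.
rewrite (set_nth_default x) ?ltXY // => /eqP.
rewrite nth_uniq ?ltXY ?enum_uniq // => /eqP eq_idx.
by rewrite -(nth_index x (_ : x \in enum X)) ?mem_enum // eq_idx nth_index ?mem_enum.
Qed.

Section RegularEmbedding.
Variable gT : finGroupType.

Definition rmul_perm (g : gT) : {perm gT} := perm (mulIg g).

Lemma rmul_permE g y : rmul_perm g y = y * g. Proof. by rewrite permE. Qed.

Lemma rmul_permM g h : rmul_perm (g * h) = rmul_perm g * rmul_perm h.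
Proof. by apply/permP => y; rewrite permM !rmul_permE mulgA. Qed.

Lemma rmul_perm1 : rmul_perm 1 = 1.
Proof. by apply/permP => y; rewrite rmul_permE perm1 mulg1. Qed.

Lemma rmul_perm_inj : injective rmul_perm.
Proof. by move=> g h /permP/(_ 1); rewrite !rmul_permE !mul1g. Qed.

(* The letter t is realised by a permutation sending each left coset nu A
   onto a chosen left coset of B = phi A (there are equally many), so that
   moving along nu A by a is turned into moving along the image coset by phi a. *)
Lemma exists_rmul_perm_conj (A B : {group gT}) (phi : {morphism A >-> gT}) :
  'injm phi -> phi @* A = B ->
  exists t : {perm gT}, {in A, forall a, rmul_perm a ^ t = rmul_perm (phi a)}.
Proof.
move=> injphi phiAB.
have cardAB : #|lcosets A [set: gT]| = #|lcosets B [set: gT]|.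
  rewrite !card_lcosets; apply/eqP; rewrite -(eqn_pmul2l (cardG_gt0 A)).
  have cardA : #|A| = #|B| by rewrite -phiAB card_injm.
  by rewrite {2}cardA !Lagrange ?subsetT.
have [h [h_inj h_coset]] := inj_on_of_eq_card cardAB.
have coset_nu nu : nu *: A \in lcosets A [set: gT] by apply/lcosetsP; exists nu.
have reprA nu : (repr (nu *: A))^-1 * nu \in A.
  have := mem_repr nu (lcoset_refl A nu); rewrite mem_lcoset => /groupVr.
  by rewrite invMg invgK.
pose t nu := repr (h (nu *: A)) * phi ((repr (nu *: A))^-1 * nu).
have t_coset nu : t nu \in h (nu *: A).
  have [d _ hd] := lcosetsP (h_coset _ (coset_nu nu)).
  have : repr (h (nu *: A)) \in h (nu *: A) by rewrite hd (mem_repr d) ?lcoset_refl.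
  rewrite /t hd !mem_lcoset => dB; rewrite mulgA groupM //.
  by rewrite -phiAB mem_morphim.
have t_inj : injective t.
  move=> nu mu eq_t.
  have eqA : nu *: A = mu *: A.
    apply: h_inj; rewrite ?coset_nu //.
    have [d _ hd] := lcosetsP (h_coset _ (coset_nu nu)).
    have [e _ he] := lcosetsP (h_coset _ (coset_nu mu)).
    have := t_coset nu; have := t_coset mu; rewrite -eq_t hd he => dB eB.
    by rewrite -(lcoset_eqP eB); apply/lcoset_eqP.
  have := reprA nu; have := reprA mu; rewrite eqA => Amu Anu.
  by move: eq_t; rewrite /t eqA => /mulgI /(injmP injphi _ _ Anu Amu) /mulgI.
exists (perm t_inj) => a Aa; apply/permP => om.
have -> : om = perm t_inj ((perm t_inj)^-1 om) by rewrite permKV.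
set nu := (perm t_inj)^-1 om.
rewrite conjgE !permM permK !permE /t.
have -> : (nu * a) *: A = nu *: A by rewrite lcosetM lcoset_id.
by rewrite mulgA morphM ?mulgA.
Qed.

End RegularEmbedding.

Lemma hnn_eq_trivial (gT : finGroupType) (G A B : {group gT})
    (phi : {morphism A >-> gT}) g :
  'injm phi -> phi @* A = B -> hnn_eq G A phi [:: HG g] [::] -> g = 1.
Proof.
move=> injphi phiAB /(hnn_eval_eq _ (@rmul_perm1 gT)).
have [t tJ] := exists_rmul_perm_conj injphi phiAB.
move=> /(_ t (in2W (@rmul_permM gT)) tJ) /=; rewrite mulg1 -(rmul_perm1 gT).
exact: rmul_perm_inj.
Qed.

Section StrictSubchain.
Variable gT : finGroupType.
Local Open Scope nat_scope.
Implicit Types K Gs : nat -> {group gT}.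

Definition strict_chain n Gs :=
  [/\ 1 <= n, Gs n = 1%G, (forall i, 1 <= i < n -> Gs i.+1 \proper Gs i) &
      (forall i, n < i -> Gs i = 1%G)].

Definition steps_within K Gs :=
  forall i, 1 <= i -> exists2 m, 1 <= m & K m = Gs i /\ K m.+1 = Gs i.+1.

Lemma strict_subchain N K :
    (forall k, 1 <= k -> K k.+1 \subset K k) -> 1 <= N -> K N = 1%G ->
  exists n Gs, [/\ strict_chain n Gs, Gs 1 = K 1 & steps_within K Gs].
Proof.
elim: N K => // N IH K decK _ KN.
case: N IH KN => [_ K1 | N IH KN].
  have K2 : K 2 = 1%G by apply/val_inj/trivgP; move: (decK 1 isT); rewrite K1.
  exists 1, (fun _ => 1%G); split=> [|//|i _]; last by exists 1; rewrite ?K1 ?K2.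
  by split=> // i /andP [i1]; rewrite ltnNge i1.
have decK' k : 1 <= k -> K k.+2 \subset K k.+1 by move=> _; apply: decK.
have [n [Gs [[n1 Gsn GsP Gs1] GsK SGs]]] := IH (fun k => K k.+1) decK' isT KN.
have [eqK | neK] := eqVneq (K 2 : {set gT}) (K 1).
  exists n, Gs; split=> //; first by rewrite GsK; apply: val_inj.
  by move=> i /SGs [m m1 [Km Km1]]; exists m.+1.
pose Gs' i := if i <= 1 then K 1 else Gs i.-1.
have Gs'S i : 1 <= i -> Gs' i.+1 = Gs i by case: i.
exists n.+1, Gs'; split=> //.
- split=> // [|[|[|i]] //|i lt_ni]; first by rewrite Gs'S.
  + by rewrite Gs'S // /Gs' /= GsK properEneq neK decK.
  + by rewrite ltnS !Gs'S // => /andP [_ lt_in]; apply: GsP.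
  + case: i lt_ni => // i; rewrite ltnS => lt_ni.
    by rewrite Gs'S ?Gs1 // (leq_ltn_trans (leq0n n)).
- move=> [//|[_|i _]]; first by exists 1; rewrite ?GsK.
  by have [m m1 [Km Km1]] := SGs i.+1 isT; exists m.+1; rewrite // !Gs'S.
Qed.

End StrictSubchain.

Lemma classical_ex_minn (P : nat -> Prop) n :
  P n -> exists m, P m /\ forall k, (k < m)%N -> ~ P k.
Proof.
elim: n {-2}n (leqnn n) => [|N IH] n le_nN Pn.
  by move: le_nN Pn; rewrite leqn0 => /eqP -> P0; exists 0%N.
have [[k [lt_kn Pk]] | no_less] := classic (exists k, (k < n)%N /\ P k).
  by apply: (IH k) => //; rewrite -ltnS (leq_trans lt_kn).
by exists n; split => // k lt_kn Pk; apply: no_less; exists k.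
Qed.

Lemma iter_mul_fixed (T : Type) (f : T -> T) x m q :
  iter m f x = x -> iter (q * m) f x = x.
Proof. by move=> fx; elim: q => // q IH; rewrite mulSn iterD IH fx. Qed.

Lemma core_aut_order_pfactor (T : finType) (A' B' : {set T}) (psi : T -> T) p e :
    prime p -> (forall x, in_core A' B' psi x -> iter (p ^ e) psi x = x) ->
  exists m e', core_aut_order A' B' psi m /\ m = (p ^ e')%N.
Proof.
move=> p_pr fix_pe.
pose period m := (0 < m)%N /\ forall x, in_core A' B' psi x -> iter m psi x = x.
have [m [[m_gt0 fix_m] min_m]] : exists m, period m /\ forall k, (k < m)%N -> ~ period k.
  by apply: (classical_ex_minn (n := (p ^ e)%N)); split; rewrite ?expn_gt0 ?prime_gt0.
have m_dvd : (m %| p ^ e)%N.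
  apply/negPn/negP; rewrite /dvdn -lt0n => rem_gt0.
  apply: (min_m (p ^ e %% m) (ltn_pmod _ m_gt0)); split=> // x cx.
  have := fix_pe x cx; rewrite {1}(divn_eq (p ^ e) m) addnC iterD iter_mul_fixed //.
  exact: fix_m.
have [e' _ def_m] := dvdn_pfactor m e p_pr m_dvd.
exists m, e'; split=> //; split=> // k /andP [k_gt0 lt_km].
apply: NNPP => no_witness; apply: (min_m k lt_km); split=> // x cx.
by apply/eqP/negP => nfix; apply: no_witness; exists x; split => //; apply/negP.
Qed.

Record hnn_rep (gT : finGroupType) (G : {set gT}) := HnnRep {
  rep_type : finGroupType;
  rep_group : {group rep_type};
  rep_mor : {morphism G >-> rep_type};
  rep_t : rep_type }.

Section PRepresentations.
Variables (p : nat) (gT : finGroupType) (G A B : {group gT}).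
Variable phi : {morphism A >-> gT}.
Hypotheses (sAG : A \subset G) (sBG : B \subset G) (phiAB : phi @* A = B).

Definition p_rep (r : hnn_rep G) :=
  [/\ p.-group (rep_group r), rep_mor r @* G \subset rep_group r,
      rep_t r \in rep_group r &
      {in A, forall a, rep_mor r a ^ rep_t r = rep_mor r (phi a)}].

Lemma exists_separating_reps :
    'injm phi -> @hnn_residually_p p gT G A phi ->
  exists F : gT -> hnn_rep G, (forall g, p_rep (F g)) /\
    forall g, g \in G -> g != 1 -> rep_mor (F g) g != 1.
Proof.
move=> injphi resp.
suff rep_g g : exists r, p_rep r /\ (g \in G -> g != 1 -> rep_mor r g != 1).
  exists (fun g => proj1_sig (constructive_indefinite_description _ (rep_g g))).
  by split=> g; case: constructive_indefinite_description => r [].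
have [/andP [Gg ntg] | triv_g] := boolP ((g \in G) && (g != 1)); last first.
  exists (HnnRep [1 gT]%G (@triv_morph gT gT G) 1); split=> [|Gg ntg].
    by split=> /=; rewrite ?pgroup1 ?morphim_trivm // => a _; rewrite conjg1.
  by rewrite Gg ntg in triv_g.
have word_g : hnn_word_in G [:: HG g] by rewrite /hnn_word_in /= Gg.
have nt_word : ~ hnn_eq G A phi [:: HG g] [::].
  by move/(hnn_eq_trivial injphi phiAB)/eqP; rewrite (negPf ntg).
have [rT [P [f [t [pP fGP tP fJ ev]]]]] := resp _ word_g nt_word.
by exists (HnnRep P f t); split=> //= _ _; rewrite /= mulg1 in ev.
Qed.

Variables (I : finType) (F : I -> hnn_rep G).
Hypotheses (F_p : forall i, p_rep (F i))
  (F_sep : forall g, g \in G -> g != 1 -> exists i, rep_mor (F i) g != 1).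

Local Notation f i := (rep_mor (F i)).
Local Notation P i := (rep_group (F i)).
Local Notation t i := (rep_t (F i)).

Lemma rep_morP i y : y \in G -> f i y \in P i.
Proof. by move=> Gy; have [_ fGP _ _] := F_p i; rewrite (subsetP fGP) ?mem_morphim. Qed.

Lemma rep_tP i : t i \in P i. Proof. by have [] := F_p i. Qed.

Lemma rep_morJ i a : a \in A -> f i a ^ t i = f i (phi a).
Proof. by have [_ _ _ fJ] := F_p i; apply: fJ. Qed.

Definition pre_lcn_set k := [set y in G | [forall i, f i y \in 'L_k(P i)]].

Lemma pre_lcn_group_set k : group_set (pre_lcn_set k).
Proof.
apply/group_setP; split=> [|y z].
  by rewrite inE group1; apply/forallP => i; rewrite morph1.
rewrite !inE => /andP [Gy /forallP Ly] /andP [Gz /forallP Lz].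
by rewrite groupM //; apply/forallP => i; rewrite morphM // groupM.
Qed.

Canonical pre_lcn k := Group (pre_lcn_group_set k).

Lemma pre_lcnP k y :
  reflect (y \in G /\ forall i, f i y \in 'L_k(P i)) (y \in pre_lcn k).
Proof. by rewrite inE; apply: (iffP andP) => [] [Gy /forallP Ly]. Qed.

Lemma pre_lcn1 : pre_lcn 1 = G.
Proof.
apply/val_inj/setP => y /=; rewrite inE andb_idr // => Gy.
by apply/forallP => i; rewrite lcn1 rep_morP.
Qed.

Lemma pre_lcnS k : pre_lcn k.+1 \subset pre_lcn k.
Proof.
apply/subsetP => y /pre_lcnP [Gy Ly]; apply/pre_lcnP; split=> // i.
exact: subsetP (lcn_subS _ _) _ (Ly i).
Qed.

Lemma pre_lcn_normal k : pre_lcn k <| G.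
Proof.
apply/andP; split; first by apply/subsetP => y /pre_lcnP [].
apply/subsetP => g Gg; rewrite inE; apply/subsetP => _ /imsetP [y /pre_lcnP [Gy Ly] ->].
apply/pre_lcnP; split=> [|i]; first by rewrite groupJ.
by rewrite morphJ // memJ_norm ?Ly // (subsetP (lcn_norm _ _)) ?rep_morP.
Qed.

Lemma commg_pre_lcn k : [~: pre_lcn k, G] \subset pre_lcn k.+1.
Proof.
rewrite gen_subG; apply/subsetP => _ /imset2P [y g /pre_lcnP [Gy Ly] Gg ->].
apply/pre_lcnP; split=> [|i]; first by rewrite groupR.
by rewrite morphR // (subsetP (lcnSnS _ _)) ?mem_commg ?rep_morP.
Qed.

Lemma pre_lcn_compat k : phi @* (A :&: pre_lcn k) = B :&: pre_lcn k.
Proof.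
have nLt i : t i \in 'N('L_k(P i)) by rewrite (subsetP (lcn_norm _ _)) ?rep_tP.
apply/setP => z; apply/idP/idP.
  case/morphimP => a Aa /setIP [_ /pre_lcnP [Ga La]] ->.
  rewrite inE -phiAB mem_morphim //; apply/pre_lcnP; split=> [|i].
    by rewrite (subsetP sBG) // -phiAB mem_morphim.
  by rewrite -rep_morJ // memJ_norm.
case/setIP => Bz /pre_lcnP [Gz Lz]; move: Bz Gz Lz; rewrite -phiAB.
case/morphimP => a _ Aa -> _ La; rewrite mem_morphim // inE Aa.
apply/pre_lcnP; split=> [|i]; first exact: subsetP sAG a Aa.
by have := La i; rewrite -rep_morJ // memJ_norm.
Qed.

Definition rep_class := \max_(i : I) nil_class (P i).

Lemma pre_lcn_trivial : pre_lcn rep_class.+1 = 1%G.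
Proof.
apply/val_inj/trivgP/subsetP => y /pre_lcnP [Gy Ly]; rewrite inE.
apply/negPn/negP => nty; have [i /negP] := F_sep Gy nty; apply.
have [pP _ _ _] := F_p i.
have /(lcn_nil_classP _ (pgroup_nil pP)) lcn_triv := leqnn (nil_class (P i)).
have le_class : (nil_class (P i)).+1 <= rep_class.+1.
  by rewrite ltnS (@leq_bigmax _ (fun i => nil_class (P i)) i).
have := subsetP (lcn_sub_leq _ le_class) _ (Ly i).
by rewrite lcn_triv => /set1P ->.
Qed.

Section CoreAutomorphism.
Variables (k l : nat) (a b : gT).
Hypotheses (aAK : a \in A :&: pre_lcn k) (bBK : b \in B :&: pre_lcn k).

Local Notation L := (pre_lcn l).
Local Notation A' := (((A :&: pre_lcn k) * L) / L).
Local Notation B' := (((B :&: pre_lcn k) * L) / L).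
Local Notation psi := (@psi_ij gT A phi (pre_lcn k) L a b).

Let Aa : a \in A. Proof. by case/setIP: aAK. Qed.
Let Ga : a \in G. Proof. exact: subsetP sAG a Aa. Qed.
Let Gb : b \in G. Proof. by case/setIP: bBK => /(subsetP sBG). Qed.

(* Modulo 'L_l(P i), psi is conjugation by this element of P i. *)
Definition psi_conj i := f i a * t i * f i b.

Lemma psi_conjP i : psi_conj i \in P i.
Proof. by rewrite !groupM ?rep_morP ?rep_tP. Qed.

Definition lifts_conj (n : nat) (y z : gT) :=
  forall i, exists2 m, m \in 'L_l(P i) & f i z = m * f i y ^ (psi_conj i ^+ n).

Lemma psi_lift X y : X \in A' -> y \in G -> coset L y = X ->
  exists z, [/\ z \in G, coset L z = psi X & lifts_conj 1 y z].
Proof.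
move=> A'X Gy yX.
have nLG : G \subset 'N(L) := normal_norm (pre_lcn_normal l).
have nKG : G \subset 'N(pre_lcn k) := normal_norm (pre_lcn_normal k).
have [w _ /mulsgP [u v AKu Lv ->] Xw] := morphimP A'X.
have Gu : u \in G by case/setIP: AKu => /(subsetP sAG).
have Gv : v \in G by apply: subsetP (normal_sub (pre_lcn_normal l)) v Lv.
have AKua : u ^ a \in A :&: pre_lcn k.
  by case/setIP: AKu => Au Ku; rewrite inE groupJ ?memJ_norm ?(subsetP nKG).
have ua_rep : coset L (u ^ a) = X ^ coset L a.
  rewrite Xw -morphJ ?(subsetP nLG) ?groupM // conjMg [RHS]coset_kerr //.
  by rewrite memJ_norm // (subsetP nLG).
rewrite /psi_ij /phi_ij; case: pickP => [y' /andP [/setIP [Ay' _] /eqP y'X] | none];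
  last by have := none (u ^ a); rewrite AKua ua_rep eqxx.
have Gy' := subsetP sAG _ Ay'.
have Gphi : phi y' \in G by rewrite (subsetP sBG) // -phiAB mem_morphim.
exists (phi y' ^ b); split; first by rewrite groupJ.
  by rewrite morphJ // (subsetP nLG).
move=> i; rewrite -yX -morphJ ?(subsetP nLG) // in y'X.
have [m Lm def_y'] := kercoset_rcoset (subsetP nLG _ Gy') (subsetP nLG _ (groupJ Gy Ga)) y'X.
have Gm : m \in G by apply: subsetP (normal_sub (pre_lcn_normal l)) m Lm.
exists (f i m ^ (t i * f i b)).
  case/pre_lcnP: Lm => _ /(_ i) Lm; rewrite memJ_norm //.
  by rewrite (subsetP (lcn_norm _ _)) ?groupM ?rep_tP ?rep_morP.
rewrite morphJ // -rep_morJ // def_y' morphM ?groupJ // morphJ //.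
by rewrite expg1 /psi_conj !conjgM (conjMg (f i m)) conjMg.
Qed.

Lemma in_core_psi X : in_core A' B' psi X -> in_core A' B' psi (psi X).
Proof. by move=> cX n; case/setIP: (cX n.+1) => /setIP [/setIdP [_]]. Qed.

Lemma in_core_sub X : in_core A' B' psi X -> X \in A'.
Proof. by move=> cX; case/setIP: (cX 0). Qed.

Lemma psi_iter_lift X y n : in_core A' B' psi X -> y \in G -> coset L y = X ->
  exists z, [/\ z \in G, coset L z = iter n psi X & lifts_conj n y z].
Proof.
move=> cX Gy yX; elim: n => [|n [z [Gz zX lift_z]]].
  by exists y; split=> // i; exists 1; rewrite ?group1 // conjg1 mul1g.
have cXn : in_core A' B' psi (iter n psi X).
  by elim: n {z Gz zX lift_z} => // n; apply: in_core_psi.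
have [z' [Gz' z'X lift_z']] := psi_lift (in_core_sub cXn) Gz zX.
exists z'; split=> // i; have [m' Lm' ->] := lift_z' i; have [m Lm ->] := lift_z i.
exists (m' * m ^ psi_conj i).
  by rewrite groupM // memJ_norm // (subsetP (lcn_norm _ _)) ?psi_conjP.
by rewrite expg1 conjMg mulgA expgSr (conjgM (f i y)).
Qed.

Lemma core_aut_order_p : prime p ->
  exists m e, core_aut_order A' B' psi m /\ m = (p ^ e)%N.
Proof.
move=> p_pr; pose E := (\sum_i logn p #|P i|)%N.
apply: (core_aut_order_pfactor (e := E)) => // X cX.
have [w _ AKw Xw] := morphimP (in_core_sub cX).
have sAKG : A :&: pre_lcn k \subset G by rewrite subIset ?sAG.
have Gw : w \in G by rewrite (subsetP (mul_subG sAKG (normal_sub (pre_lcn_normal l)))).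
have [z [Gz <- lift_z]] := psi_iter_lift (p ^ E) cX Gw (esym Xw).
have -> : z = z * w^-1 * w by rewrite mulgKV.
rewrite Xw coset_kerl //; apply/pre_lcnP; split=> [|i].
  by rewrite groupM ?groupV.
rewrite morphM ?groupV // morphV //; have [m Lm ->] := lift_z i.
have -> : psi_conj i ^+ (p ^ E) = 1.
  apply/eqP; rewrite -order_dvdn (dvdn_trans (order_dvdG (psi_conjP i))) //.
  have [pP _ _ _] := F_p i.
  by rewrite (card_pgroup pP) dvdn_exp2l // /E (bigD1 i) //= leq_addr.
by rewrite conjg1 mulgK.
Qed.

End CoreAutomorphism.

End PRepresentations.

Theorem proposition1p4 (p : nat) (gT : finGroupType) (G A B : {group gT})
    (phi : {morphism A >-> gT}) :
  prime p -> p.-group G -> A \subset G -> B \subset G ->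
  'injm phi -> phi @* A = B ->
  @hnn_residually_p p gT G A phi ->
  exists (n : nat) (Gs : nat -> {group gT}),
    [/\ filtration G n Gs, central_filtration G n Gs,
        @compatible_filtration gT A B phi Gs &
        forall i j, (1 <= i)%N -> (i < j)%N ->
        forall a b, a \in A :&: Gs i -> b \in B :&: Gs i ->
          exists m e,
            core_aut_order (((A :&: Gs i) * Gs j) / Gs j)
                           (((B :&: Gs i) * Gs j) / Gs j)
                           (@psi_ij gT A phi (Gs i) (Gs j) a b) m
            /\ m = (p ^ e)%N].
Proof.
move=> p_pr _ sAG sBG injphi phiAB resp.
have [F [F_p F_sep]] := exists_separating_reps phiAB injphi resp.
have F_sep' g : g \in G -> g != 1 -> exists i, rep_mor (F i) g != 1.
  by move=> Gg ntg; exists g; apply: F_sep.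
have [n [Gs [[n_gt0 Gs_n GsP Gs_gt_n] Gs1 GsK]]] :=
  strict_subchain (fun k _ => pre_lcnS F k) (ltn0Sn _) (pre_lcn_trivial F_p F_sep').
have nKG k : pre_lcn F k <| G := pre_lcn_normal F_p k.
exists n, Gs; split.
- split=> // [|i /GsK [m _ [<- _]]]; last exact: nKG.
  by rewrite Gs1 (pre_lcn1 F_p).
- move=> i /GsK [m _ [<- <-]].
  by rewrite subsetI quotientS ?(normal_sub (nKG m)) ?quotient_cents2r ?(commg_pre_lcn F_p).
- by move=> i /GsK [m _ [<- _]]; apply: (pre_lcn_compat sAG sBG phiAB F_p).
- move=> i j i_gt0 lt_ij a b; have [k _ [<- _]] := GsK i i_gt0.
  have [l _ [<- _]] := GsK j (leq_trans i_gt0 (ltnW lt_ij)).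
  by move=> aAK bBK; apply: (core_aut_order_p sAG sBG phiAB F_p).
Qed.
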